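(* Fix $w,z\in S_n$ and let $\mathcal{L}=\{x\in C_z^\vee:\kappa(x)\ge\kappa(w)\}$. Suppose $\mathcal{L}$ has a maximum element $y_M$ and a minimum element $y_m$ in the inversion table order, and let $J=\{1\le j\le n:\iota_j(y_M)=\iota_j(y_m)+1\}$. If $x\in S_n$ satisfies $\iota(x)=\iota(y_M)-e_j$ for some $j\in J$ (where $e_j$ is the $j$th standard basis vector), then $x\in\mathcal{L}$.
   Context: Permutations are in one-line notation. For $x\in S_n$: inversion table $\iota_k(x)=\#\{i<x^{-1}(k):x(i)>k\}$; code $\kappa_k(x)=\#\{i<x(k):x^{-1}(i)>k\}$. A permutation is determined by its inversion table. Vectors are compared componentwise; the inversion table order on $S_n$ is $x\le y$ iff $\iota(x)\le\iota(y)$. For $z\in S_n$, $C_z^\vee$ is the Boolean sublattice of the inversion table order generated by the elements covered by $z$, namely the set of $x\in S_n$ with $\iota_k(z)-1\le\iota_k(x)\le\iota_k(z)$ for all $k$. *)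

From mathcomp Require Import all_boot all_order all_fingroup.
Set Implicit Arguments. Unset Strict Implicit. Unset Printing Implicit Defensive.

(* Permutations of S_n are elements of 'S_n = {perm 'I_n}; values are
   0-based (k : 'I_n stands for k+1). One-line notation: x i is x(i). *)

Definition inv_table n (x : 'S_n) (k : 'I_n) : nat :=
  #|[set i : 'I_n | (i < (x^-1)%g k) && (k < x i)]|.

Definition code n (x : 'S_n) (k : 'I_n) : nat :=
  #|[set i : 'I_n | (i < x k) && (k < (x^-1)%g i)]|.

Definition it_le n (x y : 'S_n) : Prop :=
  forall k, inv_table x k <= inv_table y k.

Definition Cvee n (z : 'S_n) : {set 'S_n} :=
  [set x : 'S_n | [forall k, (inv_table z k <= (inv_table x k).+1)
                            && (inv_table x k <= inv_table z k)]].

Definition Lset n (w z : 'S_n) : {set 'S_n} :=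
  [set x in Cvee z | [forall k, code w k <= code x k]].

Definition is_max_it n (A : {set 'S_n}) (y : 'S_n) : Prop :=
  y \in A /\ forall x, x \in A -> it_le x y.
Definition is_min_it n (A : {set 'S_n}) (y : 'S_n) : Prop :=
  y \in A /\ forall x, x \in A -> it_le y x.

From mathcomp Require Import all_boot all_order all_fingroup.
From mathcomp Require Import zify.
Set Implicit Arguments. Unset Strict Implicit. Unset Printing Implicit Defensive.

(* As ym and yM both lie in C_z^vee, ι(ym) <= ι(yM) <= ι(ym) + 1, hence
   ι(ym) <= ι(x) <= ι(ym) + 1 with equality at j, and x lies in C_z^vee.
   Let q be the position of j in yM and p < q the last position before q
   holding an entry larger than j.  Swapping the entries of yM at p and q
   lowers ι_j by one and keeps the other ι_k, so it produces x (a permutation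
   is determined by its inversion table), and it does not decrease κ_k for
   k <> p.  At k = p = x^-1(j) we compare x with ym instead: the number of
   entries smaller than t among the first P positions decreases as the
   inversion table grows, which forces ym(p) <= j and then
   κ_p(ym) <= κ_p(x).  Thus κ(x) dominates κ(yM) or κ(ym) coordinatewise,
   and both dominate κ(w). *)

Lemma cards_agree_off2 (T : finType) (A B : {set T}) (p q : T) : p != q ->
  (forall i, i != p -> i != q -> (i \in A) = (i \in B)) ->
  #|A| + (p \in B) + (q \in B) = #|B| + (p \in A) + (q \in A).
Proof.
move=> neq_pq agree.
have neq_qp : (q == p) = false by rewrite eq_sym (negbTE neq_pq).
have splitC (C : {set T}) : #|C| = (p \in C) + (q \in C) + #|C :\ p :\ q|.
  by rewrite (cardsD1 p) (cardsD1 q (C :\ p)) !inE neq_qp addnA.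
rewrite (splitC A) (splitC B).
have -> : B :\ p :\ q = A :\ p :\ q.
  apply/setP => i; rewrite !inE.
  by case: eqVneq => //= nq; case: eqVneq => //= np; rewrite agree.
move: (p \in A) (q \in A) (p \in B) (q \in B) #|A :\ p :\ q| => a1 a2 b1 b2 r; lia.
Qed.

Section InversionTables.
Variable n : nat.
Implicit Types (a b x y : 'S_n) (Q : pred 'I_n).

Definition nbelow y (t P : nat) : nat := #|[set i : 'I_n | (i < P) && (y i < t)]|.

Lemma card_prefixS Q (p : 'I_n) :
  #|[set i : 'I_n | (i < p.+1) && Q i]| = #|[set i : 'I_n | (i < p) && Q i]| + Q p.
Proof.
rewrite (cardsD1 p) inE ltnSn addnC; congr (_ + _); apply: eq_card => i.
by rewrite !inE ltnS leq_eqVlt val_eqE; case: eqVneq => [->|] /=; rewrite ?ltnn.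
Qed.

Lemma nbelow_valE y t P :
  nbelow y t P = #|[set u : 'I_n | (u < t) && ((y^-1)%g u < P)]|.
Proof.
rewrite -(card_preimset _ (@perm_inj _ y)); apply: eq_card => i.
by rewrite !inE permK andbC.
Qed.

Lemma nbelow0 y P : nbelow y 0 P = 0.
Proof. by apply: eq_card0 => i; rewrite inE ltn0 andbF. Qed.

Lemma nbelowS_pos y t (p : 'I_n) : nbelow y t p.+1 = nbelow y t p + (y p < t).
Proof. exact: card_prefixS. Qed.

Lemma nbelowS_val y (t : 'I_n) P : nbelow y t.+1 P = nbelow y t P + ((y^-1)%g t < P).
Proof. by rewrite !nbelow_valE card_prefixS. Qed.

Lemma nbelow_add_suffix y t P :
  nbelow y t P + #|[set i : 'I_n | (y i < t) && (P <= i)]| = #|[set u : 'I_n | u < t]|.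
Proof.
rewrite -(card_preimset [set u : 'I_n | u < t] (@perm_inj _ y)).
rewrite -(cardsID [set i : 'I_n | i < P] (y @^-1: [set u : 'I_n | u < t])).
by congr (_ + _); apply: eq_card => i; rewrite !inE -?leqNgt andbC.
Qed.

Lemma code_posE y k : code y k = #|[set i : 'I_n | (y i < y k) && (k < i)]|.
Proof.
rewrite /code -(card_preimset _ (@perm_inj _ y)); apply: eq_card => i.
by rewrite !inE permK.
Qed.

Lemma prefix_partition y (t : 'I_n) P : P <= n ->
  #|[set i : 'I_n | (i < P) && (t < y i)]| + nbelow y t P + ((y^-1)%g t < P) = P.
Proof.
elim: P => [|P IH] ltPn.
  rewrite /nbelow !(_ : forall Q, #|[set i : 'I_n | (i < 0) && Q i]| = 0) //.
  by move=> Q; apply: eq_card0 => i; rewrite inE.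
move: (IH (ltnW ltPn)); have [o ->] : exists o : 'I_n, P = o by exists (Ordinal ltPn).
have -> : ((y^-1)%g t < o.+1) = ((y^-1)%g t < o) + (y o == t :> nat) :> nat.
  rewrite ltnS leq_eqVlt !val_eqE.
  have -> : ((y^-1)%g t == o) = (y o == t) by rewrite -(inj_eq (@perm_inj _ y)) permKV eq_sym.
  by case: eqVneq => [<-|_]; rewrite ?permK ?ltnn ?addn0.
rewrite (card_prefixS (fun i => t < y i)) nbelowS_pos.
by case: ltngtP; lia.
Qed.

Lemma pos_ltE y (t : 'I_n) P : P <= n ->
  ((y^-1)%g t < P) = (inv_table y t + nbelow y t P < P).
Proof.
move=> lePn; have := prefix_partition y t lePn.
have mono P1 P2 : P1 <= P2 ->
    #|[set i : 'I_n | (i < P1) && (t < y i)]| <= #|[set i : 'I_n | (i < P2) && (t < y i)]|.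
  move=> le12; apply: subset_leq_card; apply/subsetP => i; rewrite !inE.
  by case/andP=> /leq_trans-> //.
rewrite /inv_table; case: ltnP => [lt_tP | le_Pt].
- by have := mono _ _ (ltnW lt_tP); lia.
- by have := mono _ _ le_Pt; lia.
Qed.

Lemma pos_lt_eq a b (t : 'I_n) P : P <= n ->
  inv_table a t = inv_table b t -> nbelow a t P = nbelow b t P ->
  ((a^-1)%g t < P) = ((b^-1)%g t < P).
Proof. by move=> lePn eq_it eq_nb; rewrite !pos_ltE // eq_it eq_nb. Qed.

Lemma nbelow_antimono a b d t P :
  (forall v, inv_table a v <= inv_table b v + d) -> t <= n -> P + d <= n ->
  nbelow b t P <= nbelow a t (P + d).
Proof.
move=> le_ab; elim: t P => [|t IH] P lt_tn lePd; first by rewrite nbelow0.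
move: (IH P (ltnW lt_tn) lePd).
have [o ->] : exists o : 'I_n, t = o by exists (Ordinal lt_tn).
move: (le_ab o); rewrite !nbelowS_val (pos_ltE a _ lePd).
rewrite (pos_ltE b _ (leq_trans (leq_addr _ _) lePd)).
by case: ltnP; case: ltnP; lia.
Qed.

Lemma nbelow_le a b t P :
  (forall v, inv_table a v <= inv_table b v) -> t <= n -> P <= n ->
  nbelow b t P <= nbelow a t P.
Proof.
move=> le_ab letn lePn.
have le_ab0 v : inv_table a v <= inv_table b v + 0 by rewrite addn0.
by have := @nbelow_antimono a b 0 t P le_ab0 letn; rewrite !addn0; apply.
Qed.

Lemma inv_table_inj a b : (forall v, inv_table a v = inv_table b v) -> a = b.
Proof.
move=> eq_ab; apply: invg_inj; apply/permP => t.
have eq_nb P : P <= n -> nbelow a t P = nbelow b t P.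
  move=> lePn; have letn := ltnW (ltn_ord t).
  have le_ab v : inv_table a v <= inv_table b v by rewrite eq_ab.
  have le_ba v : inv_table b v <= inv_table a v by rewrite eq_ab.
  by apply/anti_leq; rewrite !nbelow_le.
have eq_pos P : P <= n -> ((a^-1)%g t < P) = ((b^-1)%g t < P).
  by move=> lePn; apply: pos_lt_eq; rewrite ?eq_nb.
apply: ord_inj; apply/anti_leq/andP; split; rewrite -ltnS.
- by rewrite eq_pos ?ltnSn.
- by rewrite -eq_pos ?ltnSn.
Qed.

Section Sandwich.
Variables (x y : 'S_n) (j : 'I_n).
Hypotheses (le_yx : forall k, inv_table y k <= inv_table x k)
  (le_xy1 : forall k, inv_table x k <= inv_table y k + 1)
  (eq_j : inv_table x j = inv_table y j).
Let p := (x^-1)%g j.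

Lemma le_at_pos : y p <= j.
Proof.
have xp : x p = j by rewrite permKV.
have lejn := ltnW (ltn_ord j); have lep1n : p + 1 <= n by rewrite addn1.
have le_x_y := nbelow_le le_yx lejn (ltnW (ltn_ord p)).
have := nbelow_antimono le_xy1 lejn lep1n.
rewrite addn1 nbelowS_pos xp ltnn addn0 => le_y_x1.
rewrite leqNgt; apply/negP => lt_j_yp.
have eq_p : nbelow x j p = nbelow y j p by apply/anti_leq; rewrite le_x_y le_y_x1.
have eq_p1 : nbelow x j p.+1 = nbelow y j p.+1.
  by rewrite !nbelowS_pos xp ltnn ltnNge (ltnW lt_j_yp) eq_p.
have pos_p : ((x^-1)%g j < p) = ((y^-1)%g j < p) by apply: pos_lt_eq; rewrite // ltnW.
have pos_p1 : ((x^-1)%g j < p.+1) = ((y^-1)%g j < p.+1) by apply: pos_lt_eq.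
have yj : (y^-1)%g j = p.
  apply: ord_inj; apply/anti_leq/andP; split.
  - by rewrite -ltnS -pos_p1 ltnSn.
  - by rewrite leqNgt -pos_p ltnn.
by move: lt_j_yp; rewrite -yj permKV ltnn.
Qed.

Lemma code_le_at_pos : code y p <= code x p.
Proof.
have xp : x p = j by rewrite permKV.
have := nbelow_le le_yx (ltnW (ltn_ord j)) (ltn_ord p).
have := nbelow_add_suffix y j p.+1; have := nbelow_add_suffix x j p.+1.
rewrite !code_posE xp.
have : #|[set i : 'I_n | (y i < y p) && (p < i)]| <= #|[set i : 'I_n | (y i < j) && (p < i)]|.
  apply: subset_leq_card; apply/subsetP => i; rewrite !inE => /andP[lt_yi ->].
  by rewrite (leq_trans lt_yi le_at_pos).
lia.
Qed.

End Sandwich.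

Section Swap.
Variables (y : 'S_n) (p q : 'I_n).
Hypotheses (lt_pq : p < q) (lt_yqp : y q < y p)
  (lt_between : forall i : 'I_n, p < i -> i < q -> y i < y q).

Let neq_pq : p != q.
Proof. by rewrite -val_eqE neq_ltn lt_pq. Qed.

Let tpermD_off2 i : i != p -> i != q -> tperm p q i = i.
Proof. by move=> np nq; rewrite tpermD // eq_sym. Qed.

Lemma inv_table_swap v : inv_table (tperm p q * y) v + (v == y q) = inv_table y v.
Proof.
have [r ->] : exists r, v = y r by exists ((y^-1)%g v); rewrite permKV.
rewrite /inv_table invMg tpermV permM !permK (inj_eq perm_inj).
set A := [set i | _]; set B := [set i | _].
have agree i : i != p -> i != q -> (i \in A) = (i \in B).
  move=> np nq; rewrite !inE permM (tpermD_off2 np nq).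
  have := @lt_between i; have := @lt_between r; move: np nq; rewrite -!val_eqE /=.
  by case: (tpermP p q r) => [->|->|_ _]; lia.
have := cards_agree_off2 neq_pq agree; rewrite !inE !permM tpermL tpermR.
have := @lt_between r; move: neq_pq.
by case: (tpermP p q r) => [->|->|/eqP + /eqP +]; rewrite -!val_eqE /=; lia.
Qed.

Lemma code_swap k : k != p -> code y k <= code (tperm p q * y) k.
Proof.
move=> nkp; rewrite !code_posE permM.
case: (eqVneq k q) => [->|nkq].
  rewrite tpermR; apply: subset_leq_card; apply/subsetP => i; rewrite !inE permM.
  case/andP=> lt_yi lt_qi; rewrite lt_qi andbT tpermD_off2 ?(ltn_trans lt_yi) //.
  - by rewrite -val_eqE neq_ltn (ltn_trans lt_pq lt_qi) orbT.
  - by rewrite -val_eqE neq_ltn lt_qi orbT.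
rewrite tpermD_off2 //.
set A := [set i | _]; set B := [set i | _].
have agree i : i != p -> i != q -> (i \in A) = (i \in B).
  by move=> np nq; rewrite !inE permM (tpermD_off2 np nq).
have := cards_agree_off2 neq_pq agree; rewrite !inE !permM tpermL tpermR.
have := @lt_between k; move: nkp nkq; rewrite -!val_eqE /=; lia.
Qed.

End Swap.

Lemma last_larger_before y (q : 'I_n) : 0 < inv_table y (y q) ->
  exists p : 'I_n, [/\ p < q, y q < y p & forall i : 'I_n, p < i -> i < q -> y i < y q].
Proof.
rewrite /inv_table permK => /card_gt0P[i0]; rewrite inE => larger_i0.
have [p /andP[lt_pq lt_yqp] p_last] :=
  @arg_maxnP _ i0 (fun i => (i < q) && (y q < y i)) (@nat_of_ord n) larger_i0.
exists p; split=> // i lt_pi lt_iq; case: ltngtP => // [lt_yqi | eq_yiq].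
- by have := p_last i; rewrite lt_iq lt_yqi => /(_ isT); rewrite /= leqNgt lt_pi.
- by move: lt_iq; rewrite (perm_inj (val_inj eq_yiq)) ltnn.
Qed.

Lemma code_le_off_pos x y (j : 'I_n) :
  (forall k, inv_table x k + (k == j) = inv_table y k) ->
  forall k, k != (x^-1)%g j -> code y k <= code x k.
Proof.
move=> it_x k; set q := (y^-1)%g j.
have yq : y q = j by rewrite permKV.
have [|p [lt_pq lt_yqp lt_between]] := @last_larger_before y q.
  by have := it_x j; rewrite yq eqxx; lia.
have -> : x = (tperm p q * y)%g.
  apply: inv_table_inj => v; have := it_x v.
  by have := inv_table_swap lt_pq lt_yqp lt_between v; rewrite yq; lia.
rewrite invMg tpermV permM tpermR.
exact: code_swap.
Qed.

End InversionTables.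

Theorem lemma5p3 (n : nat) (w z yM ym x : 'S_n) (j : 'I_n) :
  is_max_it (Lset w z) yM ->
  is_min_it (Lset w z) ym ->
  inv_table yM j = (inv_table ym j).+1 ->
  (forall k : 'I_n, inv_table x k + (k == j) = inv_table yM k) ->
  x \in Lset w z.
Proof.
move=> [yM_L _] [ym_L ym_min] it_j it_x.
have le_mM := ym_min yM yM_L.
move: yM_L ym_L; rewrite !inE => /andP[/forallP box_M /forallP code_M].
move=> /andP[/forallP box_m /forallP code_m].
have le_mx k : inv_table ym k <= inv_table x k.
  by have := it_x k; have := le_mM k; case: eqVneq => [->|_]; lia.
have le_xm1 k : inv_table x k <= inv_table ym k + 1.
  by have := it_x k; have /andP[] := box_M k; have /andP[] := box_m k; lia.
have eq_j : inv_table x j = inv_table ym j by have := it_x j; rewrite eqxx; lia.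
apply/andP; split.
  apply/forallP => k; have := it_x k; have := le_mx k.
  by have /andP[] := box_M k; have /andP[] := box_m k; lia.
apply/forallP => k; case: (eqVneq k ((x^-1)%g j)) => [->|nk].
- exact: leq_trans (code_m _) (code_le_at_pos le_mx le_xm1 eq_j).
- exact: leq_trans (code_M k) (code_le_off_pos it_x nk).
Qed.
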